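(* Let $N\ge1$, let $a_1,\dots,a_N\ge 0$, let $b_1,\dots,b_N>0$ be pairwise distinct, set $a=\sum_{j=1}^Na_j$, and let $u_0\in\mathbb{R}$. Let $p(t)=(u(t),v_1(t),\dots,v_N(t))$ be the solution of $$\dot u=-a u+b_1v_1,\quad \dot v_j=a_ju-b_jv_j+b_{j+1}v_{j+1}\ (1\le j\le N-1),\quad \dot v_N=a_Nu-b_Nv_N,$$ with $p(0)=(u_0,0,\dots,0)$. Then $u$ solves the memory equation $$\dot u(t)=-a\,u(t)+\int_0^tK(t-s)u(s)\,ds,\qquad u(0)=u_0,$$ where $K(t)=\sum_{j=1}^Na_jK_j(t)$ with $K_j(t)=\sum_{i=1}^j b_i\psi_i^je^{-b_it}$ and $\psi_i^j=\prod_{k=1,k\neq i}^j\frac{b_k}{b_k-b_i}$. Moreover $a=k(0)$ where $k$ is the Laplace transform of $K$, each $K_j(t)\ge0$ and hence $K(t)\ge 0$ for all $t\ge0$, and $u(t)\to u_0/Z$ as $t\to\infty$, where $$Z=1+\sum_{i=1}^N\frac1{b_i}\sum_{j=i}^Na_j.$$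
   Context: The system is $\dot p=A^*p$ where $A^*$ is the $(N+1)\times(N+1)$ matrix with first row $(-a,b_1,0,\dots,0)$, and for $j=1,\dots,N$ the row $j$ (indexing rows from $0$) has entry $a_j$ in column $0$, $-b_j$ on the diagonal and $b_{j+1}$ in column $j+1$ (if $j<N$), all other entries zero. It is the transpose of a Markov generator (nonnegative off-diagonal entries, zero column sums). The Laplace transform is $k(\lambda)=\int_0^\infty e^{-\lambda t}K(t)\,dt$; one has $k(\lambda)=\sum_j a_j\prod_{i=1}^j\frac{b_i}{\lambda+b_i}$. *)

From Stdlib Require Import Reals Lra Lia List.
Import ListNotations.
Open Scope R_scope.

Definition sum_range (lo hi : nat) (f : nat -> R) : R :=
  fold_right (fun i acc => f i + acc) 0 (seq lo (S hi - lo)).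

Definition prod_range (lo hi : nat) (f : nat -> R) : R :=
  fold_right (fun i acc => f i * acc) 1 (seq lo (S hi - lo)).

Definition psi (b : nat -> R) (i j : nat) : R :=
  prod_range 1 j (fun k => if Nat.eq_dec k i then 1 else b k / (b k - b i)).

Definition Kj (b : nat -> R) (j : nat) (t : R) : R :=
  sum_range 1 j (fun i => b i * psi b i j * exp (- b i * t)).

Definition Kker (N : nat) (a b : nat -> R) (t : R) : R :=
  sum_range 1 N (fun j => a j * Kj b j t).

Definition improper_int_0_inf (f : R -> R) (l : R) : Prop :=
  forall eps : R, eps > 0 -> exists T0 : R, forall T : R, T >= T0 ->
    exists pr : Riemann_integrable f 0 T, Rabs (RiemannInt pr - l) < eps.

Definition laplace_at (K : R -> R) (lam l : R) : Prop :=
  improper_int_0_inf (fun t => exp (- lam * t) * K t) l.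

(* Let psi^m_{i,j} be the partial-fraction coefficients of prod_{k=m}^j b_k / (lam + b_k) and
   K_{m,j}(t) = sum_i b_i psi^m_{i,j} e^{-b_i t}, so that K_{1,j} = K_j.  Two identities carry the
   proof: sum_i b_i psi^m_{i,j} = 0 for m < j, and psi^m_{i,j} = b_m / (b_m - b_i) psi^{m+1}_{i,j}.
   They give K_{m,j}' = b_m (K_{m+1,j} - K_{m,j}) with K_{m,j}(0) = 0, whence K_{m,j} >= 0 by
   downward induction on m; at lam = 0 the decomposition gives sum_i psi^1_{i,j} = 1, which is
   int_0^oo K_j = 1 and so k(0) = a.  For the memory equation, the combinations
   V_m = sum_{j>=m} a_j sum_i b_i psi^m_{i,j} (e^{-b_i .} * u) of exponential convolutions of u
   satisfy the same triangular system as b_m v_m with zero initial data, so b_1 v_1 = V_1 is the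
   memory integral.  For the limit, u + sum_j v_j is conserved and the equilibrium is
   (1, pi_1, ..., pi_N) u0 / Z with pi_j = (sum_{k>=j} a_k) / b_j; the quadratic Lyapunov function
   of the relative deviations decreases at the rate of a Dirichlet form, which controls it by a
   discrete Poincare inequality when a_N > 0, hence decays exponentially.  If a_N = 0 the
   components beyond the last nonzero a_J vanish and the chain truncates at J. *)

From Stdlib Require Import Reals Lra Lia List.
From Coquelicot Require Import Coquelicot.
Open Scope R_scope.

Lemma sum_range_empty lo hi f : (hi < lo)%nat -> sum_range lo hi f = 0.
Proof. intros H. unfold sum_range. now replace (S hi - lo)%nat with 0%nat by lia. Qed.

Lemma sum_range_first lo hi f :
  (lo <= hi)%nat -> sum_range lo hi f = f lo + sum_range (S lo) hi f.
Proof. intros H. unfold sum_range. now replace (S hi - lo)%nat with (S (S hi - S lo)) by lia. Qed.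

Lemma sum_range_last lo hi f :
  (lo <= S hi)%nat -> sum_range lo (S hi) f = sum_range lo hi f + f (S hi).
Proof.
  intros H. unfold sum_range.
  replace (S (S hi) - lo)%nat with (S (S hi - lo)) by lia.
  rewrite seq_S, fold_right_app. replace (lo + (S hi - lo))%nat with (S hi) by lia.
  cbn [fold_right].
  induction (seq lo (S hi - lo)) as [|i l IHl]; cbn [fold_right]; [ring | rewrite IHl; ring].
Qed.

Lemma sum_range_le lo hi f g :
  (forall i, (lo <= i <= hi)%nat -> f i <= g i) -> sum_range lo hi f <= sum_range lo hi g.
Proof.
  intros Hfg. unfold sum_range.
  assert (Hin : forall i, In i (seq lo (S hi - lo)) -> f i <= g i)
    by (intros i Hi; apply in_seq in Hi; apply Hfg; lia).
  induction (seq lo (S hi - lo)) as [|i l IHl]; simpl; [lra|].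
  apply Rplus_le_compat; [apply Hin; now left | apply IHl; intros; apply Hin; now right].
Qed.

Lemma sum_range_ext lo hi f g :
  (forall i, (lo <= i <= hi)%nat -> f i = g i) -> sum_range lo hi f = sum_range lo hi g.
Proof.
  intros Hfg. apply Rle_antisym; apply sum_range_le; intros i Hi; rewrite Hfg by exact Hi; lra.
Qed.

Lemma sum_range_plus lo hi f g :
  sum_range lo hi (fun i => f i + g i) = sum_range lo hi f + sum_range lo hi g.
Proof. unfold sum_range. induction (seq lo (S hi - lo)); simpl; lra. Qed.

Lemma sum_range_scal lo hi c f : sum_range lo hi (fun i => c * f i) = c * sum_range lo hi f.
Proof. unfold sum_range. induction (seq lo (S hi - lo)); simpl; lra. Qed.

Lemma sum_range_minus lo hi f g :
  sum_range lo hi (fun i => f i - g i) = sum_range lo hi f - sum_range lo hi g.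
Proof.
  rewrite (sum_range_ext _ _ _ (fun i => f i + -1 * g i)) by (intros; ring).
  rewrite sum_range_plus, sum_range_scal. ring.
Qed.

Lemma sum_range_opp lo hi f : sum_range lo hi (fun i => - f i) = - sum_range lo hi f.
Proof. rewrite <- (Rmult_1_l (sum_range lo hi f)), Ropp_mult_distr_l, <- sum_range_scal.
  apply sum_range_ext. intros; ring. Qed.

Lemma sum_range_zero lo hi f : (forall i, (lo <= i <= hi)%nat -> f i = 0) -> sum_range lo hi f = 0.
Proof.
  intros Hf. rewrite (sum_range_ext _ _ f (fun i => 0 * f i)) by (intros i Hi; rewrite (Hf i Hi); ring).
  rewrite sum_range_scal. ring.
Qed.

Lemma sum_range_nonneg lo hi f : (forall i, (lo <= i <= hi)%nat -> 0 <= f i) -> 0 <= sum_range lo hi f.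
Proof.
  intros Hf. rewrite <- (sum_range_zero lo hi (fun _ => 0)) by reflexivity. now apply sum_range_le.
Qed.

Lemma sum_range_shift lo hi f : sum_range (S lo) (S hi) f = sum_range lo hi (fun i => f (S i)).
Proof.
  unfold sum_range. replace (S (S hi) - S lo)%nat with (S hi - lo)%nat by lia.
  generalize (S hi - lo)%nat. intros n. revert lo.
  induction n as [|n IHn]; intros lo; simpl; [reflexivity | now rewrite IHn].
Qed.

Lemma sum_range_split lo mid hi f : (lo <= S mid)%nat -> (mid <= hi)%nat ->
  sum_range lo hi f = sum_range lo mid f + sum_range (S mid) hi f.
Proof.
  intros Hlo Hhi. induction Hhi as [|hi Hhi IH].
  - rewrite (sum_range_empty (S mid)) by lia. ring.
  - rewrite !sum_range_last, IH by lia. ring.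
Qed.

Lemma sum_range_telescope (F : nat -> R) j :
  sum_range 1 j (fun k => F k - F (k - 1)%nat) = F j - F 0%nat.
Proof.
  induction j as [|j IHj]; [rewrite sum_range_empty by lia; ring|].
  rewrite sum_range_last, IHj by lia. replace (S j - 1)%nat with j by lia. ring.
Qed.

Lemma sum_range_Cauchy_Schwarz (d : nat -> R) j :
  sum_range 1 j d * sum_range 1 j d <= INR j * sum_range 1 j (fun k => d k * d k).
Proof.
  induction j as [|j IHj]; [rewrite !sum_range_empty by lia; simpl; lra|].
  rewrite !sum_range_last, S_INR by lia.
  set (s := sum_range 1 j d) in *. set (q := sum_range 1 j (fun k => d k * d k)) in *.
  set (x := d (S j)).
  assert (0 <= q) by (apply sum_range_nonneg; intros; nra).
  pose proof (pos_INR j).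
  (* (s + x)^2 <= (j + 1)(q + x^2) follows from s^2 <= j q and 2 j s x <= s^2 + j^2 x^2 *)
  destruct (Req_dec (INR j) 0) as [Hj|Hj].
  - assert (j = 0%nat) by (apply INR_eq; exact Hj). subst j.
    unfold s. rewrite sum_range_empty by lia. simpl INR. nra.
  - assert ((INR j + 1) * (s * s) <= (INR j + 1) * (INR j * q)) by (apply Rmult_le_compat_l; lra).
    pose proof (Rle_0_sqr (s - INR j * x)) as Hsq. unfold Rsqr in Hsq.
    apply Rmult_le_reg_l with (INR j); [lra | nra].
Qed.

Lemma prod_range_first lo hi f :
  (lo <= hi)%nat -> prod_range lo hi f = f lo * prod_range (S lo) hi f.
Proof. intros H. unfold prod_range. now replace (S hi - lo)%nat with (S (S hi - S lo)) by lia. Qed.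

Lemma prod_range_empty lo hi f : (hi < lo)%nat -> prod_range lo hi f = 1.
Proof. intros H. unfold prod_range. now replace (S hi - lo)%nat with 0%nat by lia. Qed.

Lemma prod_range_ext lo hi f g :
  (forall i, (lo <= i <= hi)%nat -> f i = g i) -> prod_range lo hi f = prod_range lo hi g.
Proof.
  intros Hfg. unfold prod_range.
  assert (Hin : forall i, In i (seq lo (S hi - lo)) -> f i = g i)
    by (intros i Hi; apply in_seq in Hi; apply Hfg; lia).
  induction (seq lo (S hi - lo)) as [|i l IHl]; simpl; [reflexivity|].
  rewrite (Hin i (or_introl eq_refl)), IHl; [reflexivity|].
  intros k Hk. apply Hin. now right.
Qed.

Lemma prod_range_one lo hi f : (forall i, (lo <= i <= hi)%nat -> f i = 1) -> prod_range lo hi f = 1.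
Proof.
  intros Hf. rewrite (prod_range_ext _ _ f (fun _ => 1)) by exact Hf.
  unfold prod_range. induction (seq lo (S hi - lo)); simpl; [reflexivity | rewrite IHl; ring].
Qed.

Lemma derivable_pt_lim_ext f g x l :
  (forall t, f t = g t) -> derivable_pt_lim f x l -> derivable_pt_lim g x l.
Proof.
  intros E H eps Heps. destruct (H eps Heps) as [d Hd]. exists d. intros h H1 H2. rewrite <- !E. auto.
Qed.

Lemma derivable_pt_lim_scal_l c f x l :
  derivable_pt_lim f x l -> derivable_pt_lim (fun t => c * f t) x (c * l).
Proof. exact (derivable_pt_lim_scal f c x l). Qed.

Lemma derivable_pt_lim_exp_scal c x : derivable_pt_lim (fun t => exp (c * t)) x (c * exp (c * x)).
Proof.
  rewrite Rmult_comm. apply (derivable_pt_lim_comp (fun t => c * t) exp).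
  - pose proof (derivable_pt_lim_scal_l c id x 1 (derivable_pt_lim_id x)) as H.
    now rewrite Rmult_1_r in H.
  - apply derivable_pt_lim_exp.
Qed.

Lemma derivable_pt_lim_sum_range lo hi (F : nat -> R -> R) dF x :
  (forall i, (lo <= i <= hi)%nat -> derivable_pt_lim (F i) x (dF i)) ->
  derivable_pt_lim (fun t => sum_range lo hi (fun i => F i t)) x (sum_range lo hi dF).
Proof.
  intros HF. unfold sum_range.
  assert (Hin : forall i, In i (seq lo (S hi - lo)) -> derivable_pt_lim (F i) x (dF i))
    by (intros i Hi; apply in_seq in Hi; apply HF; lia).
  induction (seq lo (S hi - lo)) as [|i l IHl]; cbn [fold_right].
  - apply derivable_pt_lim_const.
  - apply (derivable_pt_lim_plus (F i)); [apply Hin; now left | apply IHl; intros; apply Hin; now right].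
Qed.

Lemma derivable_pt_lim_continuous f x l : derivable_pt_lim f x l -> continuous f x.
Proof. intros H. apply (@ex_derive_continuous R_AbsRing). exists l. now apply is_derive_Reals. Qed.

Lemma derivative_zero_const G t : (forall x, derivable_pt_lim G x 0) -> G t = G 0.
Proof.
  intros HG. destruct (Rtotal_order 0 t) as [Ht|[<-|Ht]]; [| reflexivity |].
  - destruct (MVT_cor2 G (fun _ => 0) 0 t Ht) as [x [Hx _]]; [intros; apply HG | lra].
  - destruct (MVT_cor2 G (fun _ => 0) t 0 Ht) as [x [Hx _]]; [intros; apply HG | lra].
Qed.

Lemma linear_ode_zero f df c :
  (forall t, derivable_pt_lim f t (df t)) -> (forall t, df t = - c * f t) -> f 0 = 0 ->
  forall t, f t = 0.
Proof.
  intros Hf Hdf Hf0 t.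
  assert (HG : forall x, derivable_pt_lim (fun s => exp (c * s) * f s) x 0).
  { intros x. replace 0 with (c * exp (c * x) * f x + exp (c * x) * df x) by (rewrite Hdf; ring).
    apply (derivable_pt_lim_mult (fun s => exp (c * s)) f); [apply derivable_pt_lim_exp_scal | apply Hf]. }
  pose proof (derivative_zero_const _ t HG) as Ht. simpl in Ht.
  rewrite Hf0, Rmult_0_r in Ht. pose proof (exp_pos (c * t)). nra.
Qed.

Lemma gronwall_lower f df c :
  (forall t, derivable_pt_lim f t (df t)) -> (forall t, 0 <= t -> - c * f t <= df t) ->
  forall t, 0 <= t -> f 0 * exp (- c * t) <= f t.
Proof.
  intros Hf Hdf t Ht.
  set (G := fun s => exp (c * s) * f s).
  set (dG := fun s => c * exp (c * s) * f s + exp (c * s) * df s).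
  assert (HG : forall x, derivable_pt_lim G x (dG x))
    by (intros x; apply (derivable_pt_lim_mult (fun s => exp (c * s)) f);
        [apply derivable_pt_lim_exp_scal | apply Hf]).
  assert (HGt : G 0 <= G t).
  { destruct (Req_dec t 0) as [->|Ht0]; [lra|].
    destruct (MVT_cor2 G dG 0 t) as [x [Hx Hxt]]; [lra | intros; apply HG |].
    assert (0 <= dG x) by (unfold dG; pose proof (Hdf x ltac:(lra)); pose proof (exp_pos (c * x)); nra).
    nra. }
  unfold G in HGt. rewrite Rmult_0_r, exp_0, Rmult_1_l in HGt.
  replace (f t) with (exp (- c * t) * (exp (c * t) * f t))
    by (rewrite <- Rmult_assoc, <- exp_plus; replace (- c * t + c * t) with 0 by ring; rewrite exp_0; ring).
  pose proof (exp_pos (- c * t)). nra.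
Qed.

Lemma RiemannInt_of_is_RInt f x y l :
  is_RInt f x y l -> exists pr : Riemann_integrable f x y, RiemannInt pr = l.
Proof.
  intros H. assert (Hex : ex_RInt f x y) by (exists l; exact H).
  exists (ex_RInt_Reals_0 f x y Hex). rewrite <- RInt_Reals. now apply is_RInt_unique.
Qed.

Lemma is_RInt_sum_range lo hi (F : nat -> R -> R) I x y :
  (forall i, (lo <= i <= hi)%nat -> is_RInt (F i) x y (I i)) ->
  is_RInt (fun t => sum_range lo hi (fun i => F i t)) x y (sum_range lo hi I).
Proof.
  intros HF. unfold sum_range.
  assert (Hin : forall i, In i (seq lo (S hi - lo)) -> is_RInt (F i) x y (I i))
    by (intros i Hi; apply in_seq in Hi; apply HF; lia).
  induction (seq lo (S hi - lo)) as [|i l IHl]; cbn [fold_right].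
  - pose proof (@is_RInt_const R_NormedModule x y 0) as H0.
    now replace (scal (y - x) (0 : R_NormedModule)) with 0 in H0 by (symmetry; apply Rmult_0_r).
  - apply (@is_RInt_plus R_NormedModule); [apply Hin; now left | apply IHl; intros; apply Hin; now right].
Qed.

Definition vanishes_at_infinity (f : R -> R) : Prop :=
  forall eps, eps > 0 -> exists T, forall t, t >= T -> Rabs (f t) < eps.

Lemma vanishes_ext f g : (forall t, f t = g t) -> vanishes_at_infinity f -> vanishes_at_infinity g.
Proof. intros E Hf eps Heps. destruct (Hf eps Heps) as [T HT]. exists T. intros t Ht. rewrite <- E. auto. Qed.

Lemma vanishes_exp_neg c : 0 < c -> vanishes_at_infinity (fun t => exp (- c * t)).
Proof.
  intros Hc eps Heps. exists ((Rabs (ln eps) + 1) / c). intros t Ht.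
  rewrite Rabs_pos_eq by (left; apply exp_pos).
  rewrite <- (exp_ln eps) by lra. apply exp_increasing.
  assert (c * t >= Rabs (ln eps) + 1).
  { apply Rmult_ge_compat_l with (r := c) in Ht; [|lra].
    now replace (c * ((Rabs (ln eps) + 1) / c)) with (Rabs (ln eps) + 1) in Ht by (field; lra). }
  pose proof (Rle_abs (- ln eps)). rewrite Rabs_Ropp in *. lra.
Qed.

Lemma vanishes_scal c f : vanishes_at_infinity f -> vanishes_at_infinity (fun t => c * f t).
Proof.
  intros Hf eps Heps. pose proof (Rabs_pos c).
  destruct (Hf (eps / (Rabs c + 1))) as [T HT]; [apply Rdiv_lt_0_compat; lra|].
  exists T. intros t Ht. specialize (HT t Ht). rewrite Rabs_mult.
  apply Rmult_lt_compat_r with (r := Rabs c + 1) in HT; [|lra].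
  replace (eps / (Rabs c + 1) * (Rabs c + 1)) with eps in HT by (field; lra).
  pose proof (Rabs_pos (f t)). nra.
Qed.

Lemma vanishes_sum_range lo hi (F : nat -> R -> R) :
  (forall i, (lo <= i <= hi)%nat -> vanishes_at_infinity (F i)) ->
  vanishes_at_infinity (fun t => sum_range lo hi (fun i => F i t)).
Proof.
  intros HF. unfold sum_range.
  assert (Hin : forall i, In i (seq lo (S hi - lo)) -> vanishes_at_infinity (F i))
    by (intros i Hi; apply in_seq in Hi; apply HF; lia).
  induction (seq lo (S hi - lo)) as [|i l IHl]; cbn [fold_right]; intros eps Heps.
  - exists 0. intros. rewrite Rabs_R0. lra.
  - destruct (Hin i (or_introl eq_refl) (eps / 2)) as [T1 H1]; [lra|].
    destruct (IHl (fun k Hk => Hin k (or_intror Hk)) (eps / 2)) as [T2 H2]; [lra|].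
    exists (Rmax T1 T2). intros t Ht. pose proof (Rmax_l T1 T2). pose proof (Rmax_r T1 T2).
    specialize (H1 t ltac:(lra)). specialize (H2 t ltac:(lra)).
    pose proof (Rabs_triang (F i t) (fold_right (fun i acc => F i t + acc) 0 l)). lra.
Qed.

Lemma improper_int_of_antiderivative f F l :
  (forall t, derivable_pt_lim F t (f t)) -> (forall t, continuous f t) ->
  vanishes_at_infinity (fun T => F T - F 0 - l) -> improper_int_0_inf f l.
Proof.
  intros HF Hf Hlim eps Heps. destruct (Hlim eps Heps) as [T0 HT0]. exists T0. intros T HT.
  assert (HI : is_RInt f 0 T (minus (F T) (F 0))).
  { apply (@is_RInt_derive R_CompleteNormedModule); intros; [apply is_derive_Reals, HF | apply Hf]. }
  destruct (RiemannInt_of_is_RInt _ _ _ _ HI) as [pr Hpr]. exists pr. rewrite Hpr. now apply HT0.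
Qed.

Section PartialFractions.

Variable N : nat.
Variable b : nat -> R.
Hypothesis b_distinct :
  forall i j, (1 <= i <= N)%nat -> (1 <= j <= N)%nat -> i <> j -> b i <> b j.

Definition psi_from (m i j : nat) : R :=
  prod_range m j (fun k => if Nat.eq_dec k i then 1 else b k / (b k - b i)).

Definition psi_sum (m j : nat) (c : nat -> R) : R :=
  sum_range m j (fun i => b i * psi_from m i j * c i).

Lemma psi_from_first m i j :
  (m <= j)%nat -> i <> m -> psi_from m i j = b m / (b m - b i) * psi_from (S m) i j.
Proof.
  intros Hmj Him. unfold psi_from. rewrite prod_range_first by exact Hmj.
  now destruct (Nat.eq_dec m i); [lia|].
Qed.

Lemma psi_from_diag m j :
  (m <= j)%nat -> psi_from m m j = prod_range (S m) j (fun k => b k / (b k - b m)).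
Proof.
  intros Hmj. unfold psi_from. rewrite prod_range_first by exact Hmj.
  destruct (Nat.eq_dec m m) as [_|]; [rewrite Rmult_1_l|lia].
  apply prod_range_ext. intros k Hk. now destruct (Nat.eq_dec k m); [lia|].
Qed.

Lemma psi_from_same j : psi_from j j j = 1.
Proof. rewrite psi_from_diag by lia. apply prod_range_empty. lia. Qed.

Definition partial_fractions_at (m j : nat) (lam : R) : Prop :=
  prod_range m j (fun k => b k / (lam + b k)) = sum_range m j (fun i => b i * psi_from m i j / (lam + b i)).

(* Evaluating the decomposition on [S m .. j] at the pole [lam = - b m] gives the weight
   of [1 / (lam + b m)]. *)
Lemma sum_b_psi_from_eq0_of m j :
  (1 <= m)%nat -> (m < j <= N)%nat -> partial_fractions_at (S m) j (- b m) ->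
  sum_range m j (fun i => b i * psi_from m i j) = 0.
Proof.
  intros Hm Hj HPF. unfold partial_fractions_at in HPF.
  rewrite sum_range_first, psi_from_diag by lia.
  rewrite (prod_range_ext _ _ _ (fun k => b k / (- b m + b k))) by (intros k Hk; f_equal; ring).
  rewrite HPF, <- sum_range_scal, <- sum_range_plus. apply sum_range_zero. intros i Hi.
  assert (b i <> b m) by (apply b_distinct; lia).
  rewrite (psi_from_first m i j) by lia. field. split; intro; apply H; lra.
Qed.

Lemma partial_fractions_step m j lam :
  (1 <= m)%nat -> (m < j <= N)%nat -> (forall k, (m <= k <= j)%nat -> lam + b k <> 0) ->
  sum_range m j (fun i => b i * psi_from m i j) = 0 ->
  partial_fractions_at (S m) j lam -> partial_fractions_at m j lam.
Proof.
  intros Hm Hj Hlam Hsum HPF. unfold partial_fractions_at in *.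
  rewrite prod_range_first, HPF, (sum_range_first m j) by lia.
  rewrite sum_range_first in Hsum by lia.
  replace (b m * psi_from m m j / (lam + b m))
    with (- / (lam + b m) * sum_range (S m) j (fun i => b i * psi_from m i j))
    by (replace (b m * psi_from m m j) with (- sum_range (S m) j (fun i => b i * psi_from m i j))
          by lra; unfold Rdiv; ring).
  rewrite <- !sum_range_scal, <- sum_range_plus. apply sum_range_ext. intros i Hi.
  rewrite (psi_from_first m i j) by lia.
  assert (b i <> b m) by (apply b_distinct; lia).
  assert (lam + b m <> 0) by (apply Hlam; lia). assert (lam + b i <> 0) by (apply Hlam; lia).
  field. repeat split; auto. intro; apply H; lra.
Qed.

Lemma partial_fractions m j lam :
  (1 <= m)%nat -> (m <= j <= N)%nat -> (forall k, (m <= k <= j)%nat -> lam + b k <> 0) ->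
  partial_fractions_at m j lam.
Proof.
  intros Hm Hj. remember (j - m)%nat as d eqn:Hd. revert m lam Hm Hj Hd.
  induction d as [|d IHd]; intros m lam Hm Hj Hd Hlam.
  - assert (j = m) by lia. subst j. unfold partial_fractions_at.
    rewrite prod_range_first, prod_range_empty, sum_range_first, sum_range_empty, psi_from_same by lia.
    field. apply Hlam. lia.
  - apply partial_fractions_step; [lia | lia | exact Hlam | |].
    2: { apply IHd; [lia | lia | lia |]. intros k Hk. apply Hlam. lia. }
    apply sum_b_psi_from_eq0_of; [lia | lia |]. apply IHd; [lia | lia | lia |].
    intros k Hk. assert (b k <> b m) by (apply b_distinct; lia). intro; apply H; lra.
Qed.

Lemma sum_b_psi_from m j : (1 <= m)%nat -> (m <= j <= N)%nat ->
  sum_range m j (fun i => b i * psi_from m i j) = if Nat.eq_dec m j then b m else 0.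
Proof.
  intros Hm Hj. destruct (Nat.eq_dec m j) as [<-|Hmj].
  - rewrite sum_range_first, sum_range_empty, psi_from_same by lia. ring.
  - apply sum_b_psi_from_eq0_of; try lia. apply partial_fractions; try lia.
    intros k Hk. assert (b k <> b m) by (apply b_distinct; lia). intro; apply H; lra.
Qed.

Lemma sum_psi_from_eq1 m j : (1 <= m)%nat -> (m <= j <= N)%nat ->
  (forall k, (m <= k <= j)%nat -> b k <> 0) -> sum_range m j (fun i => psi_from m i j) = 1.
Proof.
  intros Hm Hj Hb. assert (HPF : partial_fractions_at m j 0).
  { apply partial_fractions; auto. intros k Hk. rewrite Rplus_0_l. auto. }
  unfold partial_fractions_at in HPF. rewrite prod_range_one in HPF.
  2: { intros k Hk. rewrite Rplus_0_l. field. auto. }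
  rewrite HPF. apply sum_range_ext. intros i Hi. rewrite Rplus_0_l. field. apply Hb. exact Hi.
Qed.

Lemma psi_sum_mul_b m j c : (1 <= m)%nat -> (m <= j <= N)%nat ->
  psi_sum m j (fun i => b i * c i) = b m * psi_sum m j c - b m * psi_sum (S m) j c.
Proof.
  intros Hm Hj. unfold psi_sum. rewrite !(sum_range_first m j) by lia.
  rewrite (sum_range_ext (S m) j _ (fun i => b m * (b i * psi_from m i j * c i)
                                  + - b m * (b i * psi_from (S m) i j * c i))).
  - rewrite sum_range_plus, !sum_range_scal. ring.
  - intros i Hi. rewrite (psi_from_first m i j) by lia.
    assert (b i <> b m) by (apply b_distinct; lia). field. intro; apply H; lra.
Qed.

Lemma psi_sum_affine m j x c : (1 <= m)%nat -> (m <= j <= N)%nat ->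
  psi_sum m j (fun i => x - b i * c i)
  = (if Nat.eq_dec m j then b m * x else 0) - b m * psi_sum m j c + b m * psi_sum (S m) j c.
Proof.
  intros Hm Hj.
  transitivity (x * sum_range m j (fun i => b i * psi_from m i j) - psi_sum m j (fun i => b i * c i)).
  - unfold psi_sum. rewrite <- sum_range_scal, <- sum_range_minus. apply sum_range_ext. intros; ring.
  - rewrite psi_sum_mul_b, sum_b_psi_from by assumption. destruct (Nat.eq_dec m j); ring.
Qed.

End PartialFractions.

Lemma derivable_pt_lim_psi_sum b m j (c : nat -> R -> R) dc t :
  (forall i, (m <= i <= j)%nat -> derivable_pt_lim (c i) t (dc i)) ->
  derivable_pt_lim (fun s => psi_sum b m j (fun i => c i s)) t (psi_sum b m j dc).
Proof.
  intros Hc. unfold psi_sum.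
  apply (derivable_pt_lim_sum_range m j (fun i s => b i * psi_from b m i j * c i s)).
  intros i Hi. now apply derivable_pt_lim_scal_l, Hc.
Qed.

Definition kernel_from (b : nat -> R) (m j : nat) (t : R) : R :=
  psi_sum b m j (fun i => exp (- b i * t)).

Section Kernels.

Variable N : nat.
Variable b : nat -> R.
Hypothesis b_pos : forall j, (1 <= j <= N)%nat -> 0 < b j.
Hypothesis b_distinct :
  forall i j, (1 <= i <= N)%nat -> (1 <= j <= N)%nat -> i <> j -> b i <> b j.

Lemma derivable_pt_lim_kernel_from m j t : (1 <= m)%nat -> (m <= j <= N)%nat ->
  derivable_pt_lim (kernel_from b m j) t (b m * kernel_from b (S m) j t - b m * kernel_from b m j t).
Proof.
  intros Hm Hj.
  apply (derivable_pt_lim_ext (fun s => psi_sum b m j (fun i => (fun i s => exp (- b i * s)) i s)));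
    [reflexivity|].
  replace (b m * kernel_from b (S m) j t - b m * kernel_from b m j t)
    with (psi_sum b m j (fun i => - b i * exp (- b i * t))).
  - apply derivable_pt_lim_psi_sum. intros. apply derivable_pt_lim_exp_scal.
  - transitivity (- psi_sum b m j (fun i => b i * exp (- b i * t))).
    + unfold psi_sum. rewrite <- sum_range_opp. apply sum_range_ext. intros; ring.
    + rewrite (psi_sum_mul_b N) by assumption. unfold kernel_from. ring.
Qed.

Lemma kernel_from_at0 m j : (1 <= m)%nat -> (m < j <= N)%nat -> kernel_from b m j 0 = 0.
Proof.
  intros Hm Hj. unfold kernel_from, psi_sum.
  rewrite (sum_range_ext _ _ _ (fun i => b i * psi_from b m i j))
    by (intros; rewrite Rmult_0_r, exp_0; ring).
  rewrite (sum_b_psi_from N) by (auto; lia). now destruct (Nat.eq_dec m j); [lia|].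
Qed.

(* Downward induction on [m]: [e^{b_m t} K_{m,j}] is nondecreasing because [K_{m+1,j} >= 0]. *)
Lemma kernel_from_nonneg m j t : (1 <= m)%nat -> (m <= j <= N)%nat -> 0 <= t -> 0 <= kernel_from b m j t.
Proof.
  intros Hm Hj. remember (j - m)%nat as d eqn:Hd. revert m t Hm Hj Hd.
  induction d as [|d IHd]; intros m t Hm Hj Hd Ht.
  - assert (j = m) by lia. subst j. unfold kernel_from, psi_sum.
    rewrite sum_range_first, sum_range_empty, psi_from_same by lia.
    pose proof (b_pos m ltac:(lia)). pose proof (exp_pos (- b m * t)). nra.
  - pose proof (b_pos m ltac:(lia)) as Hbm.
    assert (Hlow : kernel_from b m j 0 * exp (- b m * t) <= kernel_from b m j t).
    { apply (gronwall_lower _ (fun s => b m * kernel_from b (S m) j s - b m * kernel_from b m j s));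
        [| | exact Ht].
      - intros s. now apply derivable_pt_lim_kernel_from.
      - intros s Hs. assert (0 <= kernel_from b (S m) j s) by (apply IHd; [lia | lia | lia | exact Hs]).
        assert (0 <= b m * kernel_from b (S m) j s) by (apply Rmult_le_pos; lra). lra. }
    now rewrite kernel_from_at0, Rmult_0_l in Hlow by lia.
Qed.

Lemma Kj_nonneg j t : (1 <= j <= N)%nat -> 0 <= t -> 0 <= Kj b j t.
Proof. intros Hj Ht. exact (kernel_from_nonneg 1 j t ltac:(lia) Hj Ht). Qed.

Lemma Kker_nonneg a t : (forall j, (1 <= j <= N)%nat -> 0 <= a j) -> 0 <= t -> 0 <= Kker N a b t.
Proof.
  intros Ha Ht. apply sum_range_nonneg. intros j Hj. apply Rmult_le_pos; [now apply Ha | now apply Kj_nonneg].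
Qed.

Lemma derivable_pt_lim_Kker a t : derivable_pt_lim (Kker N a b) t
  (sum_range 1 N (fun j => a j * (b 1%nat * kernel_from b 2 j t - b 1%nat * Kj b j t))).
Proof.
  apply (derivable_pt_lim_sum_range 1 N (fun j s => a j * Kj b j s)). intros j Hj.
  apply derivable_pt_lim_scal_l. now apply (derivable_pt_lim_kernel_from 1 j).
Qed.

(* [K_j] is the density of a sum of independent exponential times of rates [b_1 .. b_j];
   [survival j] is its tail function. *)
Definition survival (j : nat) (t : R) : R := sum_range 1 j (fun i => psi_from b 1 i j * exp (- b i * t)).

Lemma derivable_pt_lim_survival j t : derivable_pt_lim (survival j) t (- Kj b j t).
Proof.
  unfold survival.
  apply (derivable_pt_lim_ext
    (fun s => sum_range 1 j (fun i => (fun i s => psi_from b 1 i j * exp (- b i * s)) i s)));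
    [reflexivity|].
  replace (- Kj b j t) with (sum_range 1 j (fun i => psi_from b 1 i j * (- b i * exp (- b i * t)))).
  - apply derivable_pt_lim_sum_range. intros. apply derivable_pt_lim_scal_l, derivable_pt_lim_exp_scal.
  - unfold Kj, psi, psi_from. rewrite <- sum_range_opp. apply sum_range_ext. intros; ring.
Qed.

Lemma survival_at0 j : (1 <= j <= N)%nat -> survival j 0 = 1.
Proof.
  intros Hj. rewrite <- (sum_psi_from_eq1 N b b_distinct 1 j)
    by (try lia; intros k Hk; pose proof (b_pos k ltac:(lia)); lra).
  apply sum_range_ext. intros i _. rewrite Rmult_0_r, exp_0. ring.
Qed.

Lemma survival_vanishes j : (1 <= j <= N)%nat -> vanishes_at_infinity (survival j).
Proof.
  intros Hj. apply (vanishes_sum_range 1 j (fun i t => psi_from b 1 i j * exp (- b i * t))).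
  intros i Hi. apply vanishes_scal, vanishes_exp_neg, b_pos. lia.
Qed.

Lemma laplace_Kker_at0 a : laplace_at (Kker N a b) 0 (sum_range 1 N a).
Proof.
  set (F := fun t => - sum_range 1 N (fun j => a j * survival j t)).
  apply (improper_int_of_antiderivative _ F).
  - intros t. rewrite Ropp_0, Rmult_0_l, exp_0, Rmult_1_l.
    apply (derivable_pt_lim_ext (fun s => -1 * sum_range 1 N (fun j => (fun j s => a j * survival j s) j s)));
      [intros; unfold F; ring|].
    replace (Kker N a b t) with (-1 * sum_range 1 N (fun j => a j * - Kj b j t))
      by (unfold Kker; rewrite <- sum_range_scal; apply sum_range_ext; intros; ring).
    apply derivable_pt_lim_scal_l, derivable_pt_lim_sum_range. intros j _.
    apply derivable_pt_lim_scal_l, derivable_pt_lim_survival.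
  - intros t. eapply derivable_pt_lim_continuous.
    apply (derivable_pt_lim_mult (fun s => exp (- 0 * s)));
      [apply derivable_pt_lim_exp_scal | apply derivable_pt_lim_Kker].
  - assert (HF0 : F 0 = - sum_range 1 N a).
    { unfold F. f_equal. apply sum_range_ext. intros j Hj. rewrite survival_at0 by exact Hj. ring. }
    apply (vanishes_ext (fun T => -1 * sum_range 1 N (fun j => a j * survival j T))).
    + intros T. rewrite HF0. unfold F. ring.
    + apply vanishes_scal, (vanishes_sum_range 1 N (fun j T => a j * survival j T)).
      intros j Hj. now apply vanishes_scal, survival_vanishes.
Qed.

End Kernels.

Section Memory.

Variable N : nat.
Variables a b : nat -> R.
Variable u : R -> R.
Variable v : nat -> R -> R.
Hypothesis b_distinct :
  forall i j, (1 <= i <= N)%nat -> (1 <= j <= N)%nat -> i <> j -> b i <> b j.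
Hypothesis u_deriv : forall t, derivable_pt_lim u t (- sum_range 1 N a * u t + b 1%nat * v 1%nat t).
Hypothesis v_deriv : forall j t, (1 <= j <= N - 1)%nat ->
  derivable_pt_lim (v j) t (a j * u t - b j * v j t + b (S j) * v (S j) t).
Hypothesis vN_deriv : forall t, derivable_pt_lim (v N) t (a N * u t - b N * v N t).
Hypothesis v_at0 : forall j, (1 <= j <= N)%nat -> v j 0 = 0.

Definition v_rhs (j : nat) (t : R) : R :=
  a j * u t - b j * v j t + (if Nat.ltb j N then b (S j) * v (S j) t else 0).

Lemma derivable_pt_lim_v j t : (1 <= j <= N)%nat -> derivable_pt_lim (v j) t (v_rhs j t).
Proof.
  intros Hj. unfold v_rhs. destruct (Nat.ltb_spec j N) as [HjN|HjN].
  - apply v_deriv. lia.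
  - replace j with N by lia. rewrite Rplus_0_r. apply vN_deriv.
Qed.

Hypothesis N_pos : (1 <= N)%nat.

Lemma continuous_exp_scal_u c s : continuous (fun s => exp (c * s) * u s) s.
Proof.
  eapply derivable_pt_lim_continuous.
  apply (derivable_pt_lim_mult (fun s => exp (c * s)) u); [apply derivable_pt_lim_exp_scal | apply u_deriv].
Qed.

Definition exp_weighted_int (i : nat) (t : R) : R := RInt (fun s => exp (b i * s) * u s) 0 t.

Definition exp_conv (i : nat) (t : R) : R := exp (- b i * t) * exp_weighted_int i t.

Lemma is_RInt_exp_weighted i t : is_RInt (fun s => exp (b i * s) * u s) 0 t (exp_weighted_int i t).
Proof.
  apply (@RInt_correct R_CompleteNormedModule), (@ex_RInt_continuous R_CompleteNormedModule).
  intros; apply continuous_exp_scal_u.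
Qed.

Lemma derivable_pt_lim_exp_conv i t : derivable_pt_lim (exp_conv i) t (u t - b i * exp_conv i t).
Proof.
  unfold exp_conv.
  replace (u t - b i * (exp (- b i * t) * exp_weighted_int i t))
    with (- b i * exp (- b i * t) * exp_weighted_int i t + exp (- b i * t) * (exp (b i * t) * u t)).
  - apply (derivable_pt_lim_mult (fun t => exp (- b i * t))); [apply derivable_pt_lim_exp_scal|].
    apply is_derive_Reals, (@is_derive_RInt R_NormedModule (fun s => exp (b i * s) * u s) _ 0).
    + apply filter_forall. intros. apply is_RInt_exp_weighted.
    + apply continuous_exp_scal_u.
  - rewrite <- Rmult_assoc, <- exp_plus. replace (- b i * t + b i * t) with 0 by ring.
    rewrite exp_0. ring.
Qed.

Lemma exp_conv_at0 i : exp_conv i 0 = 0.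
Proof. unfold exp_conv, exp_weighted_int. rewrite RInt_point. apply Rmult_0_r. Qed.

Definition memory_term (m : nat) (t : R) : R :=
  sum_range m N (fun j => a j * psi_sum b m j (fun i => exp_conv i t)).

Lemma derivable_pt_lim_memory_term m t : (1 <= m <= N)%nat ->
  derivable_pt_lim (memory_term m) t (b m * a m * u t - b m * memory_term m t + b m * memory_term (S m) t).
Proof.
  intros Hm. unfold memory_term.
  apply (derivable_pt_lim_ext
    (fun t => sum_range m N (fun j => (fun j t => a j * psi_sum b m j (fun i => exp_conv i t)) j t)));
    [reflexivity|].
  replace (b m * a m * u t - b m * _ + b m * _)
    with (sum_range m N (fun j => a j * psi_sum b m j (fun i => u t - b i * exp_conv i t))).
  - apply derivable_pt_lim_sum_range. intros j Hj. apply derivable_pt_lim_scal_l.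
    apply (derivable_pt_lim_psi_sum b m j (fun i t => exp_conv i t)). intros; apply derivable_pt_lim_exp_conv.
  - rewrite !(sum_range_first m N), (psi_sum_affine N) by (auto; lia).
    destruct (Nat.eq_dec m m) as [_|]; [|lia].
    replace (psi_sum b (S m) m _) with 0 by (symmetry; apply sum_range_empty; lia).
    rewrite (sum_range_ext (S m) N _
      (fun j => - b m * (a j * psi_sum b m j (fun i => exp_conv i t))
                + b m * (a j * psi_sum b (S m) j (fun i => exp_conv i t)))).
    + rewrite sum_range_plus, !sum_range_scal. ring.
    + intros j Hj. rewrite (psi_sum_affine N) by (auto; lia). destruct (Nat.eq_dec m j); [lia|]. ring.
Qed.

Lemma memory_term_at0 m : memory_term m 0 = 0.
Proof.
  apply sum_range_zero. intros j _. unfold psi_sum.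
  rewrite sum_range_zero; [ring|]. intros i _. rewrite exp_conv_at0. ring.
Qed.

(* [b_m v_m] and [memory_term m] solve the same linear equation, driven by [b_{m+1} v_{m+1}] and
   [memory_term (S m)] respectively, with zero initial data. *)
Lemma b_v_eq_memory_term_step m : (1 <= m <= N)%nat ->
  (forall s, (if Nat.ltb m N then b (S m) * v (S m) s else 0) = memory_term (S m) s) ->
  forall t, b m * v m t = memory_term m t.
Proof.
  intros Hm Hnext t.
  enough (Hdiff : forall s, b m * v m s - memory_term m s = 0) by (specialize (Hdiff t); lra).
  apply (linear_ode_zero _ (fun s => b m * v_rhs m s
    - (b m * a m * u s - b m * memory_term m s + b m * memory_term (S m) s)) (b m)).
  - intros s. apply derivable_pt_lim_minus;
      [apply derivable_pt_lim_scal_l, derivable_pt_lim_v | apply derivable_pt_lim_memory_term]; lia.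
  - intros s. unfold v_rhs. rewrite Hnext. ring.
  - rewrite memory_term_at0, v_at0 by lia. ring.
Qed.

Lemma b_v_eq_memory_term m t : (1 <= m <= N)%nat -> b m * v m t = memory_term m t.
Proof.
  intros Hm. remember (N - m)%nat as d eqn:Hd. revert m t Hm Hd.
  induction d as [|d IHd]; intros m t Hm Hd; apply b_v_eq_memory_term_step; auto; intros s.
  - destruct (Nat.ltb_spec m N); [lia|]. unfold memory_term. rewrite sum_range_empty by lia. reflexivity.
  - destruct (Nat.ltb_spec m N); [apply IHd; lia | lia].
Qed.

Lemma is_RInt_memory_kernel t :
  is_RInt (fun s => Kker N a b (t - s) * u s) 0 t (b 1%nat * v 1%nat t).
Proof.
  rewrite b_v_eq_memory_term by lia.
  apply (is_RInt_ext (fun s => sum_range 1 N (fun j => (fun j s => sum_range 1 j (fun i =>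
       (a j * (b i * psi_from b 1 i j)) * (exp (- b i * t) * (exp (b i * s) * u s)))) j s))).
  - intros s _. unfold Kker, Kj, psi, psi_from. rewrite Rmult_comm, <- sum_range_scal.
    apply sum_range_ext. intros j _. rewrite <- !sum_range_scal. apply sum_range_ext. intros i _.
    replace (- b i * (t - s)) with (- b i * t + b i * s) by ring. rewrite exp_plus. ring.
  - replace (memory_term 1 t) with (sum_range 1 N (fun j => sum_range 1 j (fun i =>
       (a j * (b i * psi_from b 1 i j)) * (exp (- b i * t) * exp_weighted_int i t)))).
    + apply is_RInt_sum_range. intros j _. apply is_RInt_sum_range. intros i _.
      apply (@is_RInt_scal R_NormedModule), (@is_RInt_scal R_NormedModule), is_RInt_exp_weighted.
    + unfold memory_term, psi_sum, exp_conv. apply sum_range_ext. intros j _.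
      rewrite <- sum_range_scal. apply sum_range_ext. intros; ring.
Qed.

Lemma memory_equation t : exists pr : Riemann_integrable (fun s => Kker N a b (t - s) * u s) 0 t,
  derivable_pt_lim u t (- sum_range 1 N a * u t + RiemannInt pr).
Proof.
  destruct (RiemannInt_of_is_RInt _ _ _ _ (is_RInt_memory_kernel t)) as [pr Hpr].
  exists pr. rewrite Hpr. apply u_deriv.
Qed.

End Memory.

Definition tail_sum (N : nat) (a : nat -> R) (j : nat) : R := sum_range j N a.

Lemma tail_sum_first N a j : (j <= N)%nat -> tail_sum N a j = a j + tail_sum N a (S j).
Proof. intros Hj. unfold tail_sum. now apply sum_range_first. Qed.

Lemma tail_sum_end N a : tail_sum N a (S N) = 0.
Proof. apply sum_range_empty. lia. Qed.

(* Summation by parts: twice the quadratic form of the chain generator, in deviation variables. *)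
Lemma chain_dirichlet_identity N a (F : nat -> R) : (1 <= N)%nat ->
  2 * (F 0%nat * (tail_sum N a 1 * (F 1%nat - F 0%nat))
       + sum_range 1 N (fun j => F j * (a j * F 0%nat - tail_sum N a j * F j
                                        + tail_sum N a (S j) * F (S j))))
  = - (sum_range 1 N (fun j => a j * ((F 0%nat - F j) * (F 0%nat - F j)))
       + sum_range 1 N (fun j => tail_sum N a j * ((F j - F (j - 1)%nat) * (F j - F (j - 1)%nat)))).
Proof.
  intros HN. pose proof (tail_sum_end N a) as Aend.
  set (A := tail_sum N a) in *.
  assert (Arec : forall j, (j <= N)%nat -> a j = A j - A (S j))
    by (intros j Hj; unfold A; rewrite (tail_sum_first N a j Hj); ring).
  rewrite (sum_range_ext 1 N (fun j => F j * (a j * F 0%nat - A j * F j + A (S j) * F (S j)))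
     (fun j => F 0%nat * (a j * F j) + -1 * (A j * (F j * F j)) + A (S j) * (F j * F (S j))))
    by (intros; ring).
  rewrite (sum_range_ext 1 N (fun j => a j * ((F 0%nat - F j) * (F 0%nat - F j)))
     (fun j => F 0%nat * F 0%nat * a j + -2 * F 0%nat * (a j * F j)
               + (A j * (F j * F j) + -1 * (A (S j) * (F j * F j)))))
    by (intros j Hj; rewrite Arec by lia; ring).
  rewrite (sum_range_ext 1 N (fun j => A j * ((F j - F (j - 1)%nat) * (F j - F (j - 1)%nat)))
     (fun j => A j * (F j * F j) + -2 * (A j * (F j * F (j - 1)%nat))
               + A j * (F (j - 1)%nat * F (j - 1)%nat)))
    by (intros; ring).
  rewrite !sum_range_plus, !sum_range_scal.
  destruct N as [|n]; [lia|].
  assert (E1 : forall G, sum_range 1 (S n) (fun j => A (S j) * G j) = sum_range 1 n (fun j => A (S j) * G j))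
    by (intros G; rewrite sum_range_last, Aend by lia; ring).
  assert (E2 : forall G : nat -> nat -> R, sum_range 1 (S n) (fun j => A j * G j (j - 1)%nat)
                 = A 1%nat * G 1%nat 0%nat + sum_range 1 n (fun j => A (S j) * G (S j) j)).
  { intros G. rewrite sum_range_first, sum_range_shift by lia. f_equal.
    apply sum_range_ext. intros i _. now replace (S i - 1)%nat with i by lia. }
  rewrite (E1 (fun j => F j * F (S j))), (E1 (fun j => F j * F j)).
  rewrite (E2 (fun j k => F j * F k)), (E2 (fun j k => F k * F k)).
  change (sum_range 1 (S n) a) with (A 1%nat). simpl (1 - 1)%nat.
  rewrite (sum_range_ext 1 n (fun j => A (S j) * (F (S j) * F j)) (fun j => A (S j) * (F j * F (S j))))
    by (intros; ring).
  ring.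
Qed.

Lemma sq_increment_bound (F : nat -> R) N j : (1 <= j <= N)%nat ->
  (F j - F 0%nat) * (F j - F 0%nat)
  <= INR N * sum_range 1 N (fun k => (F k - F (k - 1)%nat) * (F k - F (k - 1)%nat)).
Proof.
  intros Hj. rewrite <- (sum_range_telescope F j).
  set (sq := fun k => (F k - F (k - 1)%nat) * (F k - F (k - 1)%nat)).
  assert (Hsq : forall k, 0 <= sq k) by (intros k; apply Rle_0_sqr).
  assert (Hsplit : sum_range 1 j sq <= sum_range 1 N sq).
  { rewrite (sum_range_split 1 j N) by lia.
    pose proof (sum_range_nonneg (S j) N sq (fun k _ => Hsq k)). lra. }
  pose proof (sum_range_nonneg 1 j sq (fun k _ => Hsq k)).
  assert (INR j <= INR N) by (apply le_INR; lia). pose proof (pos_INR j).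
  eapply Rle_trans; [apply (sum_range_Cauchy_Schwarz (fun k => F k - F (k - 1)%nat) j)|].
  fold sq. apply Rmult_le_compat; lra.
Qed.

Section Relaxation.

Variable N : nat.
Variables a b : nat -> R.
Variable u0 : R.
Variable u : R -> R.
Variable v : nat -> R -> R.
Hypothesis N_pos : (1 <= N)%nat.
Hypothesis a_nonneg : forall j, (1 <= j <= N)%nat -> 0 <= a j.
Hypothesis a_last_pos : 0 < a N.
Hypothesis b_pos : forall j, (1 <= j <= N)%nat -> 0 < b j.
Hypothesis u_deriv : forall t, derivable_pt_lim u t (- sum_range 1 N a * u t + b 1%nat * v 1%nat t).
Hypothesis v_deriv : forall j t, (1 <= j <= N - 1)%nat ->
  derivable_pt_lim (v j) t (a j * u t - b j * v j t + b (S j) * v (S j) t).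
Hypothesis vN_deriv : forall t, derivable_pt_lim (v N) t (a N * u t - b N * v N t).
Hypothesis u_at0 : u 0 = u0.
Hypothesis v_at0 : forall j, (1 <= j <= N)%nat -> v j 0 = 0.

Local Notation A := (tail_sum N a).

Lemma tail_sum_ge_last j : (1 <= j <= N)%nat -> a N <= A j.
Proof.
  intros Hj. unfold tail_sum. rewrite (sum_range_split j (N - 1) N) by lia.
  replace (S (N - 1)) with N by lia. rewrite (sum_range_first N N), (sum_range_empty (S N) N) by lia.
  pose proof (sum_range_nonneg j (N - 1) a ltac:(intros; apply a_nonneg; lia)). lra.
Qed.

(* The equilibrium is [(u_eq, pi_1 u_eq, ..., pi_N u_eq)]. *)
Definition pi (j : nat) : R := / b j * A j.

Definition u_eq : R := u0 / (1 + sum_range 1 N pi).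

Lemma pi_pos j : (1 <= j <= N)%nat -> 0 < pi j.
Proof.
  intros Hj. pose proof (tail_sum_ge_last j Hj). apply Rmult_lt_0_compat; [|lra].
  apply Rinv_0_lt_compat, b_pos, Hj.
Qed.

Lemma sum_pi_nonneg : 0 <= sum_range 1 N pi.
Proof. apply sum_range_nonneg. intros j Hj. left. now apply pi_pos. Qed.

Lemma b_mul_pi j : (1 <= j <= N)%nat -> b j * pi j = A j.
Proof. intros Hj. unfold pi. pose proof (b_pos j Hj). field. lra. Qed.

Lemma sum_v_rhs t : sum_range 1 N (fun j => v_rhs N a b u v j t) = sum_range 1 N a * u t - b 1%nat * v 1%nat t.
Proof.
  unfold v_rhs.
  rewrite (sum_range_ext _ _ _ (fun j => u t * a j - b j * v j t
                                         + (if Nat.ltb j N then b (S j) * v (S j) t else 0)))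
    by (intros; ring).
  rewrite sum_range_plus, sum_range_minus, sum_range_scal.
  destruct N as [|n]; [lia|].
  rewrite (sum_range_last 1 n (fun j => if Nat.ltb j (S n) then _ else _)), Nat.ltb_irrefl,
    (sum_range_first 1 (S n) (fun j => b j * v j t)) by lia.
  rewrite (sum_range_ext 1 n _ (fun j => b (S j) * v (S j) t))
    by (intros i Hi; now destruct (Nat.ltb_spec i (S n)); [|lia]).
  rewrite (sum_range_shift 1 n (fun j => b j * v j t)). ring.
Qed.

Lemma mass_conservation t : u t + sum_range 1 N (fun j => v j t) = u0.
Proof.
  enough (H : forall t, u t + sum_range 1 N (fun j => v j t) - u0 = 0) by (specialize (H t); lra).
  apply (linear_ode_zero _ (fun t => (- sum_range 1 N a * u t + b 1%nat * v 1%nat t)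
                                      + sum_range 1 N (fun j => v_rhs N a b u v j t) - 0) 0).
  - intros s. apply derivable_pt_lim_minus; [|apply derivable_pt_lim_const].
    apply derivable_pt_lim_plus; [apply u_deriv|]. apply derivable_pt_lim_sum_range.
    intros j Hj. now apply (derivable_pt_lim_v N a b u v v_deriv vN_deriv).
  - intros s. rewrite sum_v_rhs. ring.
  - rewrite u_at0, sum_range_zero by (intros; now apply v_at0). ring.
Qed.

(* Relative deviations from the equilibrium; index [0] is the [u] component. *)
Definition deviation (t : R) (j : nat) : R :=
  match j with O => u t - u_eq | S _ => (v j t - pi j * u_eq) / pi j end.

Lemma v_eq_deviation j t : (1 <= j <= N)%nat -> v j t = pi j * deviation t j + pi j * u_eq.
Proof. intros Hj. destruct j; [lia|]. simpl. pose proof (pi_pos (S j) Hj). field. lra. Qed.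

Lemma sum_pi_deviation t : sum_range 1 N (fun j => pi j * deviation t j) = - deviation t 0.
Proof.
  rewrite (sum_range_ext _ _ _ (fun j => v j t - u_eq * pi j))
    by (intros j Hj; rewrite (v_eq_deviation j t Hj); ring).
  rewrite sum_range_minus, sum_range_scal. pose proof (mass_conservation t). pose proof sum_pi_nonneg.
  assert (u_eq * (1 + sum_range 1 N pi) = u0) by (unfold u_eq; field; lra).
  simpl. lra.
Qed.

Lemma v_rhs_deviation j t : (1 <= j <= N)%nat ->
  v_rhs N a b u v j t = a j * deviation t 0 - A j * deviation t j + A (S j) * deviation t (S j).
Proof.
  intros Hj. unfold v_rhs. rewrite (v_eq_deviation j t Hj).
  assert (Hnext : (if Nat.ltb j N then b (S j) * v (S j) t else 0)
                  = A (S j) * deviation t (S j) + A (S j) * u_eq).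
  { destruct (Nat.ltb_spec j N).
    - rewrite (v_eq_deviation (S j) t), <- (b_mul_pi (S j)) by lia. ring.
    - replace j with N by lia. rewrite tail_sum_end. ring. }
  pose proof (b_mul_pi j Hj) as Hbpi. rewrite (tail_sum_first N a j) in Hbpi by lia.
  rewrite Hnext, (tail_sum_first N a j) by lia.
  replace (a j) with (b j * pi j - A (S j)) by lra. simpl. ring.
Qed.

Lemma u_rhs_deviation t :
  - sum_range 1 N a * u t + b 1%nat * v 1%nat t = A 1%nat * (deviation t 1%nat - deviation t 0).
Proof.
  rewrite (v_eq_deviation 1 t), <- Rmult_plus_distr_l, <- Rmult_assoc, (b_mul_pi 1) by lia.
  simpl. unfold tail_sum. ring.
Qed.

Definition lyapunov (t : R) : R :=
  deviation t 0 * deviation t 0 + sum_range 1 N (fun j => pi j * (deviation t j * deviation t j)).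

Definition dissipation (t : R) : R :=
  sum_range 1 N (fun j => a j * ((deviation t 0 - deviation t j) * (deviation t 0 - deviation t j)))
  + sum_range 1 N (fun j => A j * ((deviation t j - deviation t (j - 1)%nat)
                                   * (deviation t j - deviation t (j - 1)%nat))).

Lemma derivable_pt_lim_deviation j t : (j <= N)%nat ->
  derivable_pt_lim (fun s => deviation s j) t
    (match j with O => - sum_range 1 N a * u t + b 1%nat * v 1%nat t
                | S _ => v_rhs N a b u v j t / pi j end).
Proof.
  intros Hj. destruct j as [|j].
  - rewrite <- (Rminus_0_r (_ + _)).
    apply derivable_pt_lim_minus; [apply u_deriv | apply derivable_pt_lim_const].
  - apply (derivable_pt_lim_ext (fun s => / pi (S j) * (v (S j) s - pi (S j) * u_eq)));
      [intros; simpl; unfold Rdiv; ring|].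
    replace (v_rhs N a b u v (S j) t / pi (S j)) with (/ pi (S j) * (v_rhs N a b u v (S j) t - 0))
      by (unfold Rdiv; ring).
    apply derivable_pt_lim_scal_l, derivable_pt_lim_minus;
      [apply (derivable_pt_lim_v N a b u v v_deriv vN_deriv); lia | apply derivable_pt_lim_const].
Qed.

Lemma derivable_pt_lim_lyapunov t : derivable_pt_lim lyapunov t (- dissipation t).
Proof.
  set (du := - sum_range 1 N a * u t + b 1%nat * v 1%nat t).
  set (F := deviation t).
  apply (derivable_pt_lim_ext (fun s => (fun s => deviation s 0) s * (fun s => deviation s 0) s
    + sum_range 1 N (fun j => (fun j s => pi j * (deviation s j * deviation s j)) j s))); [reflexivity|].
  replace (- dissipation t) with (du * F 0%nat + F 0%nat * du
    + sum_range 1 N (fun j => pi j * (v_rhs N a b u v j t / pi j * F j + F j * (v_rhs N a b u v j t / pi j)))).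
  - apply derivable_pt_lim_plus.
    + apply derivable_pt_lim_mult; apply (derivable_pt_lim_deviation 0); lia.
    + apply derivable_pt_lim_sum_range. intros j Hj. apply derivable_pt_lim_scal_l.
      destruct j as [|j]; [lia|].
      apply derivable_pt_lim_mult; apply (derivable_pt_lim_deviation (S j)); lia.
  - rewrite (sum_range_ext _ _ _ (fun j => 2 * (F j * (a j * F 0%nat - A j * F j + A (S j) * F (S j)))))
      by (intros j Hj; unfold F; rewrite <- v_rhs_deviation by exact Hj;
          pose proof (pi_pos j Hj); field; lra).
    rewrite sum_range_scal. unfold du. rewrite u_rhs_deviation.
    unfold dissipation. fold F. rewrite <- (chain_dirichlet_identity N a F N_pos). ring.
Qed.

Lemma dissipation_nonneg t : 0 <= dissipation t.
Proof.
  apply Rplus_le_le_0_compat; apply sum_range_nonneg; intros j Hj; apply Rmult_le_pos;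
    try apply Rle_0_sqr.
  - now apply a_nonneg.
  - pose proof (tail_sum_ge_last j Hj). lra.
Qed.

Lemma lyapunov_le_spread t :
  lyapunov t <= sum_range 1 N (fun j => pi j * ((deviation t j - deviation t 0)
                                                * (deviation t j - deviation t 0))).
Proof.
  set (F := deviation t).
  rewrite (sum_range_ext _ _ _ (fun j => pi j * (F j * F j) + -2 * F 0%nat * (pi j * F j)
                                         + F 0%nat * F 0%nat * pi j)) by (intros; ring).
  rewrite !sum_range_plus, !sum_range_scal. unfold F. rewrite sum_pi_deviation.
  pose proof sum_pi_nonneg. pose proof (Rle_0_sqr (deviation t 0)). unfold lyapunov, Rsqr in *. nra.
Qed.

(* Discrete Poincare inequality; it needs [a_N > 0] so that every increment is dissipated. *)
Definition poincare_constant : R := sum_range 1 N pi * INR N / a N.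

Lemma poincare_constant_nonneg : 0 <= poincare_constant.
Proof.
  unfold poincare_constant, Rdiv. pose proof sum_pi_nonneg. pose proof (pos_INR N).
  apply Rmult_le_pos; [nra | left; now apply Rinv_0_lt_compat].
Qed.

Lemma poincare t : lyapunov t <= poincare_constant * dissipation t.
Proof.
  set (F := deviation t).
  set (S2 := sum_range 1 N (fun k => (F k - F (k - 1)%nat) * (F k - F (k - 1)%nat))).
  assert (HS2 : a N * S2 <= dissipation t).
  { unfold S2. rewrite <- sum_range_scal. unfold dissipation. fold F.
    pose proof (sum_range_nonneg 1 N (fun j => a j * ((F 0%nat - F j) * (F 0%nat - F j)))
      ltac:(intros; apply Rmult_le_pos; [now apply a_nonneg | apply Rle_0_sqr])).
    enough (sum_range 1 N (fun k => a N * ((F k - F (k - 1)%nat) * (F k - F (k - 1)%nat)))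
            <= sum_range 1 N (fun j => A j * ((F j - F (j - 1)%nat) * (F j - F (j - 1)%nat)))) by lra.
    apply sum_range_le. intros j Hj. apply Rmult_le_compat_r; [apply Rle_0_sqr | now apply tail_sum_ge_last]. }
  eapply Rle_trans; [apply lyapunov_le_spread|].
  eapply Rle_trans.
  { apply sum_range_le. intros j Hj. apply Rmult_le_compat_l; [left; now apply pi_pos|].
    exact (sq_increment_bound F N j Hj). }
  rewrite (sum_range_ext _ _ _ (fun j => INR N * S2 * pi j)) by (intros; unfold S2; ring).
  rewrite sum_range_scal. unfold poincare_constant.
  pose proof sum_pi_nonneg. pose proof (pos_INR N).
  assert (HS2' : S2 <= dissipation t / a N).
  { apply (Rmult_le_reg_l (a N)); [exact a_last_pos|].
    replace (a N * (dissipation t / a N)) with (dissipation t) by (field; lra). exact HS2. }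
  replace (sum_range 1 N pi * INR N / a N * dissipation t)
    with (sum_range 1 N pi * INR N * (dissipation t / a N)) by (field; lra).
  replace (INR N * S2 * sum_range 1 N pi) with (sum_range 1 N pi * INR N * S2) by ring.
  apply Rmult_le_compat_l; [nra | exact HS2'].
Qed.

Lemma lyapunov_decay t : 0 <= t ->
  lyapunov t <= lyapunov 0 * exp (- / (poincare_constant + 1) * t).
Proof.
  intros Ht. pose proof poincare_constant_nonneg.
  assert (Hlow := gronwall_lower (fun s => - lyapunov s) (fun s => dissipation s) (/ (poincare_constant + 1))).
  enough (- lyapunov 0 * exp (- / (poincare_constant + 1) * t) <= - lyapunov t) by lra.
  apply Hlow; [| | exact Ht].
  - intros s. rewrite <- (Ropp_involutive (dissipation s)).
    apply derivable_pt_lim_opp, derivable_pt_lim_lyapunov.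
  - intros s _. pose proof (poincare s). pose proof (dissipation_nonneg s).
    apply Rmult_le_reg_l with (poincare_constant + 1); [lra|].
    field_simplify; [|lra]. nra.
Qed.

Lemma u_relaxes : vanishes_at_infinity (fun t => u t - u_eq).
Proof.
  intros eps Heps. pose proof poincare_constant_nonneg.
  destruct (vanishes_scal (lyapunov 0) _ (vanishes_exp_neg (/ (poincare_constant + 1))
              ltac:(apply Rinv_0_lt_compat; lra)) (eps * eps)) as [T HT]; [nra|].
  exists (Rmax T 0). intros t Ht. pose proof (Rmax_l T 0). pose proof (Rmax_r T 0).
  specialize (HT t ltac:(lra)). pose proof (lyapunov_decay t ltac:(lra)).
  assert (Hdev : deviation t 0 * deviation t 0 <= lyapunov t).
  { unfold lyapunov. enough (0 <= sum_range 1 N (fun j => pi j * (deviation t j * deviation t j))) by lra.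
    apply sum_range_nonneg. intros j Hj. apply Rmult_le_pos; [left; now apply pi_pos | apply Rle_0_sqr]. }
  pose proof (Rle_abs (lyapunov 0 * exp (- / (poincare_constant + 1) * t))).
  apply Rsqr_incrst_0; [| apply Rabs_pos | lra]. rewrite <- Rsqr_abs. unfold Rsqr. simpl in Hdev. lra.
Qed.

End Relaxation.

Lemma last_positive_index N (a : nat -> R) : (forall j, (1 <= j <= N)%nat -> 0 <= a j) ->
  (forall j, (1 <= j <= N)%nat -> a j = 0) \/
  exists J, (1 <= J <= N)%nat /\ 0 < a J /\ forall j, (J < j <= N)%nat -> a j = 0.
Proof.
  induction N as [|N IHN]; intros Ha; [left; intros; lia|].
  destruct (Rlt_dec 0 (a (S N))) as [Hlast|Hlast].
  - right. exists (S N). repeat split; [lia | lia | exact Hlast | intros; lia].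
  - assert (a (S N) = 0) by (pose proof (Ha (S N) ltac:(lia)); lra).
    destruct IHN as [Hzero|[J [HJ [HaJ Hbeyond]]]]; [intros; apply Ha; lia | left | right].
    + intros j Hj. destruct (Nat.eq_dec j (S N)) as [->|]; [assumption | apply Hzero; lia].
    + exists J. repeat split; [lia | lia | exact HaJ |].
      intros j Hj. destruct (Nat.eq_dec j (S N)) as [->|]; [assumption | apply Hbeyond; lia].
Qed.

Section Truncation.

Variable N : nat.
Variables a b : nat -> R.
Variable u0 : R.
Variable u : R -> R.
Variable v : nat -> R -> R.
Hypothesis N_pos : (1 <= N)%nat.
Hypothesis a_nonneg : forall j, (1 <= j <= N)%nat -> 0 <= a j.
Hypothesis b_pos : forall j, (1 <= j <= N)%nat -> 0 < b j.
Hypothesis b_distinct :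
  forall i j, (1 <= i <= N)%nat -> (1 <= j <= N)%nat -> i <> j -> b i <> b j.
Hypothesis u_deriv : forall t, derivable_pt_lim u t (- sum_range 1 N a * u t + b 1%nat * v 1%nat t).
Hypothesis v_deriv : forall j t, (1 <= j <= N - 1)%nat ->
  derivable_pt_lim (v j) t (a j * u t - b j * v j t + b (S j) * v (S j) t).
Hypothesis vN_deriv : forall t, derivable_pt_lim (v N) t (a N * u t - b N * v N t).
Hypothesis u_at0 : u 0 = u0.
Hypothesis v_at0 : forall j, (1 <= j <= N)%nat -> v j 0 = 0.

Lemma b_v_zero_beyond m t : (1 <= m <= N)%nat -> (forall j, (m <= j <= N)%nat -> a j = 0) ->
  b m * v m t = 0.
Proof.
  intros Hm Hzero. rewrite (b_v_eq_memory_term N a b u v b_distinct u_deriv v_deriv vN_deriv v_at0 N_pos)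
    by exact Hm.
  apply sum_range_zero. intros j Hj. rewrite Hzero by exact Hj. ring.
Qed.

Lemma u_const_of_a_zero : (forall j, (1 <= j <= N)%nat -> a j = 0) -> forall t, u t = u0.
Proof.
  intros Hzero t. enough (H : forall t, u t - u0 = 0) by (specialize (H t); lra).
  apply (linear_ode_zero _ (fun t => (- sum_range 1 N a * u t + b 1%nat * v 1%nat t) - 0) 0).
  - intros s. apply derivable_pt_lim_minus; [apply u_deriv | apply derivable_pt_lim_const].
  - intros s. rewrite sum_range_zero, b_v_zero_beyond by (auto; lia). ring.
  - rewrite u_at0. ring.
Qed.

Lemma u_converges :
  vanishes_at_infinity (fun t => u t - u0 / (1 + sum_range 1 N (fun i => / b i * sum_range i N a))).
Proof.
  destruct (last_positive_index N a a_nonneg) as [Hzero|[J [HJ [HaJ Hbeyond]]]].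
  - intros eps Heps. exists 0. intros t _.
    rewrite u_const_of_a_zero, (sum_range_zero 1 N) by
      (auto; intros i Hi; rewrite sum_range_zero by (intros; apply Hzero; lia); ring).
    replace (u0 - u0 / (1 + 0)) with 0 by field. rewrite Rabs_R0. exact Heps.
  - assert (Htail : forall i, (i <= S J)%nat -> sum_range i N a = sum_range i J a).
    { intros i Hi. rewrite (sum_range_split i J N), (sum_range_zero (S J) N) by (auto; lia). ring. }
    apply (vanishes_ext (fun t => u t - u_eq J a b u0)).
    { intros t. unfold u_eq, pi, tail_sum. do 3 f_equal.
      rewrite (sum_range_split 1 J N), (sum_range_zero (S J) N) by
        (try lia; intros i Hi; rewrite sum_range_zero by (intros; apply Hbeyond; lia); ring).
      rewrite Rplus_0_r. apply sum_range_ext. intros i Hi. rewrite Htail by lia. reflexivity. }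
    apply (u_relaxes J a b u0 u v); try (intros; auto; lia).
    + intros j Hj. apply a_nonneg. lia.
    + intros j Hj. apply b_pos. lia.
    + intros t. rewrite <- Htail by lia. apply u_deriv.
    + intros j t Hj. apply v_deriv. lia.
    + intros t. destruct (Nat.eq_dec J N) as [->|HJN]; [apply vN_deriv|].
      pose proof (v_deriv J t ltac:(lia)) as HvJ.
      rewrite (b_v_zero_beyond (S J) t), Rplus_0_r in HvJ by (auto; lia). exact HvJ.
    + intros j Hj. apply v_at0. lia.
Qed.

End Truncation.

Theorem theorem3p1
  (N : nat) (a b : nat -> R) (u0 : R)
  (u : R -> R) (v : nat -> R -> R) :
  (1 <= N)%nat ->
  (forall j, (1 <= j <= N)%nat -> 0 <= a j) ->
  (forall j, (1 <= j <= N)%nat -> 0 < b j) ->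
  (forall i j, (1 <= i <= N)%nat -> (1 <= j <= N)%nat -> i <> j -> b i <> b j) ->
  (forall t, derivable_pt_lim u t (- sum_range 1 N a * u t + b 1%nat * v 1%nat t)) ->
  (forall j t, (1 <= j <= N - 1)%nat ->
     derivable_pt_lim (v j) t (a j * u t - b j * v j t + b (S j) * v (S j) t)) ->
  (forall t, derivable_pt_lim (v N) t (a N * u t - b N * v N t)) ->
  u 0 = u0 ->
  (forall j, (1 <= j <= N)%nat -> v j 0 = 0) ->
  (forall t, 0 <= t ->
     exists pr : Riemann_integrable (fun s => Kker N a b (t - s) * u s) 0 t,
       derivable_pt_lim u t (- sum_range 1 N a * u t + RiemannInt pr)) /\
  laplace_at (Kker N a b) 0 (sum_range 1 N a) /\
  (forall j t, (1 <= j <= N)%nat -> 0 <= t -> 0 <= Kj b j t) /\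
  (forall t, 0 <= t -> 0 <= Kker N a b t) /\
  (forall eps, eps > 0 -> exists T, forall t, t >= T ->
     Rabs (u t - u0 / (1 + sum_range 1 N (fun i => / b i * sum_range i N a))) < eps).
Proof.
  intros HN Ha Hb Hd Hu Hv HvN Hu0 Hv0.
  repeat split.
  - intros t _. exact (memory_equation N a b u v Hd Hu Hv HvN Hv0 HN t).
  - exact (laplace_Kker_at0 N b Hb Hd a).
  - intros j t. exact (Kj_nonneg N b Hb Hd j t).
  - intros t. exact (Kker_nonneg N b Hb Hd a t Ha).
  - exact (u_converges N a b u0 u v HN Ha Hb Hd Hu Hv HvN Hu0 Hv0).
Qed.
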